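(* Let $(E,\tau)$ be a violator space. Then $(E,\tau)$ is uniquely generated (in the sense that every $X\subseteq E$ has exactly one inclusion-minimal subset $B\subseteq X$ with $\tau(B)=\tau(X)$) if and only if $\tau(X)=\tau(ex(X))$ for every $X\subseteq E$.
   Context: $E$ is a finite set and $\tau:2^E\to 2^E$. $(E,\tau)$ is a violator space if (C1) $Y\subseteq\tau(Y)$ for all $Y\subseteq E$, and (C22) for all $F,G\subseteq E$, $F\subseteq G\subseteq\tau(F)$ implies $\tau(G)=\tau(F)$. An element $x\in X$ is an extreme point of $X$ if $x\notin\tau(X-\{x\})$; $ex(X)$ is the set of extreme points of $X$. *)

From mathcomp Require Import all_boot.
Set Implicit Arguments. Unset Strict Implicit. Unset Printing Implicit Defensive.

Definition violator_space (E : finType) (tau : {set E} -> {set E}) : Prop :=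
  (forall Y : {set E}, Y \subset tau Y) /\
  (forall F G : {set E}, F \subset G -> G \subset tau F -> tau G = tau F).

Definition ex (E : finType) (tau : {set E} -> {set E}) (X : {set E}) : {set E} :=
  [set x in X | x \notin tau (X :\ x)].

Definition is_basis (E : finType) (tau : {set E} -> {set E}) (X B : {set E}) : Prop :=
  minset (fun B' : {set E} => (B' \subset X) && (tau B' == tau X)) B.

Definition uniquely_generated (E : finType) (tau : {set E} -> {set E}) : Prop :=
  forall X : {set E}, exists! B : {set E}, is_basis tau X B.

From mathcomp Require Import all_boot.
Set Implicit Arguments. Unset Strict Implicit.

(* Every set B with B ⊆ X and tau B = tau X contains all extreme points of X:
   if an extreme point x were missing, B ⊆ X - x ⊆ tau B would force
   tau (X - x) = tau X, which contains x. Conversely, a non-extreme point x can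
   be dropped, tau (X - x) = tau X, so X - x already contains a basis of X.
   Hence a unique basis consists of extreme points only, so it equals ex X; and
   when tau (ex X) = tau X, ex X is a generating subset lying inside every
   other one, hence the unique basis. *)

Section ViolatorSpace.

Variables (E : finType) (tau : {set E} -> {set E}).
Hypothesis tau_violator : violator_space tau.

Lemma ex_subset (X : {set E}) : ex tau X \subset X.
Proof. by apply/subsetP=> x; rewrite inE => /andP[]. Qed.

Lemma tau_setD1_nonextreme {X : {set E}} {x : E} :
  x \in X -> x \notin ex tau X -> tau (X :\ x) = tau X.
Proof.
have [tau_ext tau_stable] := tau_violator.
move=> xX; rewrite inE xX /= negbK => x_tau.
apply/esym/tau_stable; first exact: subsetDl.
apply/subsetP=> y yX; have [->//|neq_yx] := eqVneq y x.
by apply: (subsetP (tau_ext _)); rewrite !inE neq_yx.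
Qed.

Lemma ex_subset_generating {X B : {set E}} :
  B \subset X -> tau B = tau X -> ex tau X \subset B.
Proof.
have [tau_ext tau_stable] := tau_violator.
move=> sBX tauB; apply/subsetP=> x; rewrite inE => /andP[xX x_ex].
apply/negPn/negP=> xB.
have sBXx : B \subset X :\ x by rewrite subsetD1 sBX xB.
have tauXx : tau (X :\ x) = tau B.
  by apply: tau_stable => //; rewrite tauB (subset_trans (subsetDl _ _)).
by move: x_ex; rewrite tauXx tauB (subsetP (tau_ext X)).
Qed.

Lemma basis_inside {X Y : {set E}} :
  Y \subset X -> tau Y = tau X -> exists2 B, is_basis tau X B & B \subset Y.
Proof.
move=> sYX tauY.
pose P (B : {set E}) := (B \subset Y) && (tau B == tau Y).
have PY : P Y by rewrite /P subxx eqxx.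
have [B /minsetP[/andP[sBY /eqP tauB] minB] _] := minset_exists PY.
exists B => //; apply/minsetP; split.
  by rewrite (subset_trans sBY sYX) tauB tauY eqxx.
move=> C /andP[_ /eqP tauC] sCB; apply: minB => //.
by rewrite /P (subset_trans sCB sBY) tauC tauY eqxx.
Qed.

Lemma unique_basis_subset_ex (X B : {set E}) :
  uniquely_generated tau -> is_basis tau X B -> B \subset ex tau X.
Proof.
move=> ug basisB; apply/subsetP=> x xB; apply/negPn/negP=> x_ex.
have xX : x \in X by move/minsetP: basisB => [/andP[/subsetP->]].
have [B' basisB' sB'Xx] :=
  basis_inside (subsetDl X [set x]) (tau_setD1_nonextreme xX x_ex).
have [B0 [_ uniqB0]] := ug X.
have eqB : B = B' by rewrite -(uniqB0 _ basisB) -(uniqB0 _ basisB').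
by move: (subsetP sB'Xx x); rewrite -eqB xB !inE eqxx => /(_ isT).
Qed.

Lemma ex_basis (X : {set E}) :
  tau X = tau (ex tau X) -> is_basis tau X (ex tau X).
Proof.
move=> tau_ex; apply/minsetP; split; first by rewrite ex_subset -tau_ex eqxx.
move=> C /andP[sCX /eqP tauC] sCex; apply/eqP.
by rewrite eqEsubset sCex ex_subset_generating.
Qed.

End ViolatorSpace.

Theorem mainTheorem14 (E : finType) (tau : {set E} -> {set E}) :
  violator_space tau ->
  (uniquely_generated tau <-> forall X : {set E}, tau X = tau (ex tau X)).
Proof.
move=> V; split=> [ug X | tau_ex X].
- have [B [basisB _]] := ug X.
  have /minsetP[/andP[sBX /eqP tauB] _] := basisB.
  suff -> : ex tau X = B by [].
  apply/eqP; rewrite eqEsubset (ex_subset_generating V sBX tauB).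
  exact: unique_basis_subset_ex V X B ug basisB.
- exists (ex tau X); split; first exact: ex_basis V X (tau_ex X).
  move=> B /minsetP[/andP[sBX /eqP tauB] minB]; apply: minB.
    by rewrite ex_subset -tau_ex eqxx.
  exact: (ex_subset_generating V sBX tauB).
Qed.
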